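(* Let $f:\mathbb{R}^{n_x}\to\mathbb{R}$ be twice continuously differentiable and let $\epsilon_x:\mathbb{R}^{n_x}\to[0,\infty)$. Consider the modified Newton iteration $$x^+ = x-\big(\nabla_{xx}f(x)+\epsilon_x(x)I\big)^{-1}\nabla_x f(x).$$ Let $x^*$ be an equilibrium point, i.e. $\nabla_x f(x^* )=0$. Assume that $\nabla_{xx}f(x^* )$ is invertible and that $\nabla_{xx}f(\cdot)$ is differentiable on a neighborhood of $x^*$. Assume that $\epsilon_x(\cdot)$ is constant on a neighborhood of $x^*$ and satisfies $\nabla_{xx}f(x^* )+\epsilon_x(x^* )I\succ 0$. Then: (i) if $x^*$ is a local minimum of $\min_{x\in\mathbb{R}^{n_x}} f(x)$, then $x^*$ is a locally asymptotically stable equilibrium of the iteration; (ii) if $x^*$ is not a local minimum of $\min_{x\in\mathbb{R}^{n_x}} f(x)$, then $x^*$ is an unstable equilibrium of the iteration.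
   Context: $\nabla_x f$ denotes the gradient and $\nabla_{xx}f$ the Hessian of $f$. The iteration is regarded as the discrete-time dynamical system $x_{k+1}=\Phi(x_k)$ with $\Phi(x)=x-(\nabla_{xx}f(x)+\epsilon_x(x)I)^{-1}\nabla_xf(x)$ (well defined near $x^*$); local asymptotic stability and instability are in the usual sense for such systems. *)

From HB Require Import structures.
From mathcomp Require Import all_boot all_order all_algebra.
From mathcomp Require Import all_classical all_reals all_analysis.
Set Implicit Arguments. Unset Strict Implicit. Unset Printing Implicit Defensive.
Import Order.TTheory GRing.Theory Num.Theory.
Import numFieldNormedType.Exports.
Local Open Scope ring_scope.
Local Open Scope classical_set_scope.

Section Defs.
Variables (R : realType) (n : nat).
Notation X := 'cV[R]_n.

Definition basis_vec (i : 'I_n) : X := delta_mx i 0.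

Definition grad (f : X -> R) (x : X) : X :=
  \col_i ('D_(basis_vec i) f x).

Definition hess (f : X -> R) (x : X) : 'M[R]_n :=
  \matrix_(i, j) ('D_(basis_vec j) (fun y => 'D_(basis_vec i) f y) x).

Definition C2 (f : X -> R) : Prop :=
  (forall x, differentiable f x) /\
  (forall x, differentiable (grad f) x) /\
  continuous (hess f).

Definition posdef (M : 'M[R]_n) : Prop :=
  M^T = M /\ forall v : X, v != 0 -> 0 < (v^T *m M *m v) 0 0.

Definition newton_map (f : X -> R) (eps : X -> R) (x : X) : X :=
  x - invmx (hess f x + eps x *: 1%:M) *m grad f x.

Definition local_min (f : X -> R) (xs : X) : Prop :=
  \forall x \near xs, f xs <= f x.

Definition lyap_stable (Phi : X -> X) (xs : X) : Prop :=
  forall e : R, 0 < e -> exists2 d : R, 0 < d &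
    forall x0 : X, `|x0 - xs| < d -> forall k : nat, `|iter k Phi x0 - xs| < e.

Definition loc_attractive (Phi : X -> X) (xs : X) : Prop :=
  exists2 d : R, 0 < d &
    forall x0 : X, `|x0 - xs| < d -> (fun k => iter k Phi x0) @ \oo --> xs.

Definition loc_asym_stable (Phi : X -> X) (xs : X) : Prop :=
  lyap_stable Phi xs /\ loc_attractive Phi xs.

Definition unstable (Phi : X -> X) (xs : X) : Prop := ~ lyap_stable Phi xs.

End Defs.

(* Near x*, with H = hess f x* and e = eps x*, the Newton map is linear up to small order:
   (H + e I) (Phi x - x* ) = e (x - x* ) + o(|x - x*| + |Phi x - x*|), i.e. Phi is close to
   x* + e (H + e I)^-1 (x - x* ).
   If x* is a local minimum, H is positive semidefinite and invertible, hence coercive, and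
   this linearization contracts the squared Euclidean distance to x* by a factor < 1.
   Otherwise H has a direction v of negative curvature, which forces e > 0, and the Chetaev
   function W x = - q_H (x - x* ) increases along orbits by a multiple of the squared step;
   an orbit starting at x* + t v then has W growing without bound, so it must leave every
   fixed ball around x*.
   Norms |.| are the entrywise maximum norms of the matrix library, which explains the
   factors n%:R in the estimates; vdot is the Euclidean inner product. *)

From HB Require Import structures.
From mathcomp Require Import all_boot all_order all_algebra.
From mathcomp Require Import all_classical all_reals all_analysis.
From mathcomp Require Import ring lra.
Import Order.TTheory GRing.Theory Num.Theory.
Import numFieldNormedType.Exports.
Set Implicit Arguments. Unset Strict Implicit. Unset Printing Implicit Defensive.
Local Open Scope ring_scope.
Local Open Scope classical_set_scope.

Section MatrixNorm.
Variable R : realFieldType.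

Lemma mxentry_le_norm m p (A : 'M[R]_(m, p)) i j : `|A i j| <= `|A|.
Proof.
rewrite [leRHS]/Num.Def.normr /= mx_normrE.
exact: (le_bigmax _ _ (i, j)).
Qed.

Lemma norm_mx_le m p (A : 'M[R]_(m, p)) c :
  0 <= c -> (forall i j, `|A i j| <= c) -> `|A| <= c.
Proof.
move=> c0 Ac; rewrite [leLHS]/Num.Def.normr /= mx_normrE.
by apply: bigmax_le => // -[i j] _; apply: Ac.
Qed.

Lemma norm_mulmx_le m k p (A : 'M[R]_(m, k)) (B : 'M[R]_(k, p)) :
  `|A *m B| <= k%:R * (`|A| * `|B|).
Proof.
apply: norm_mx_le => [|i j]; first by rewrite !mulr_ge0.
rewrite mxE; apply: le_trans (ler_norm_sum _ _ _) _.
have AB l : `|A i l * B l j| <= `|A| * `|B|.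
  by rewrite normrM ler_pM ?mxentry_le_norm.
by apply: le_trans (ler_sum _ (fun l _ => AB l)) _; rewrite sumr_const card_ord mulr_natl.
Qed.

End MatrixNorm.

Section VectorDot.
Variables (R : realFieldType) (n : nat).
Implicit Types (a b c : 'cV[R]_n) (B : 'M[R]_n).

Definition vdot a b : R := (a^T *m b) 0 0.

Definition qform B a : R := vdot a (B *m a).

Lemma vdotC a b : vdot a b = vdot b a.
Proof. by rewrite /vdot -{1}(trmxK (a^T *m b)) trmx_mul trmxK mxE. Qed.

Lemma vdotDr a b c : vdot a (b + c) = vdot a b + vdot a c.
Proof. by rewrite /vdot mulmxDr mxE. Qed.

Lemma vdotBr a b c : vdot a (b - c) = vdot a b - vdot a c.
Proof. by rewrite /vdot mulmxBr !mxE. Qed.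

Lemma vdotZr a k b : vdot a (k *: b) = k * vdot a b.
Proof. by rewrite /vdot -scalemxAr mxE. Qed.

Lemma vdotDl a b c : vdot (a + b) c = vdot a c + vdot b c.
Proof. by rewrite vdotC vdotDr !(vdotC c). Qed.

Lemma vdotBl a b c : vdot (a - b) c = vdot a c - vdot b c.
Proof. by rewrite vdotC vdotBr !(vdotC c). Qed.

Lemma vdotZl k a b : vdot (k *: a) b = k * vdot a b.
Proof. by rewrite vdotC vdotZr vdotC. Qed.

Lemma vdot0r a : vdot a 0 = 0.
Proof. by rewrite /vdot mulmx0 mxE. Qed.

Lemma vdot_mulmx a B b : vdot a (B *m b) = vdot (B^T *m a) b.
Proof. by rewrite /vdot trmx_mul trmxK mulmxA. Qed.

Lemma vdotE a b : vdot a b = \sum_i a i 0 * b i 0.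
Proof. by rewrite /vdot mxE; apply: eq_bigr => i _; rewrite mxE. Qed.

Lemma vdot_ge0 a : 0 <= vdot a a.
Proof. by rewrite vdotE sumr_ge0 // => i _; rewrite -expr2 sqr_ge0. Qed.

Lemma norm_vdot_le a b : `|vdot a b| <= n%:R * (`|a| * `|b|).
Proof.
apply: le_trans (mxentry_le_norm _ 0 0) _; apply: le_trans (norm_mulmx_le _ _) _.
rewrite ler_wpM2l // ler_wpM2r // norm_mx_le // => i j.
by rewrite mxE mxentry_le_norm.
Qed.

Lemma vdot_le_sqr_norm a : vdot a a <= n%:R * `|a| ^+ 2.
Proof. by rewrite expr2; apply: le_trans (ler_norm _) (norm_vdot_le _ _). Qed.

Lemma sqr_norm_le_vdot a : `|a| ^+ 2 <= vdot a a.
Proof.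
rewrite [`|a|]/Num.Def.normr /=.
have [->|/mx_norm_neq0 [[i j] ->]] := eqVneq (mx_norm a) 0; first by rewrite expr0n vdot_ge0.
rewrite vdotE (bigD1 i) //= ord1 real_normK ?num_real // -expr2 lerDl.
by apply: sumr_ge0 => k _; rewrite -expr2 sqr_ge0.
Qed.

Lemma vdot_le_sqr_norm_succ a : vdot a a <= ((n%:R + 1) * `|a|) ^+ 2.
Proof.
apply: le_trans (vdot_le_sqr_norm a) _; rewrite exprMn ler_wpM2r ?sqr_ge0 //.
by rewrite natr1 -natrX ler_nat expnS (leq_trans (leqnSn n)) // leq_pmulr ?expn_gt0.
Qed.

Lemma vdot_lt_sqr a r : (n%:R + 1) * `|a| < r -> vdot a a < r ^+ 2.
Proof.
move=> ar; apply: le_lt_trans (vdot_le_sqr_norm_succ a) _.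
have na_ge0 : 0 <= (n%:R + 1) * `|a| by rewrite mulr_ge0 // addr_ge0.
by rewrite !expr2; exact: (ltr_pM na_ge0 na_ge0 ar ar).
Qed.

Lemma norm_lt_of_vdot_lt a r : 0 <= r -> vdot a a < r ^+ 2 -> `|a| < r.
Proof.
move=> r_ge0 /(le_lt_trans (sqr_norm_le_vdot a)).
by rewrite ltr_pXn2r ?nnegrE.
Qed.

Lemma vdot_le_mean_square a b : 2%:R * vdot a b <= vdot a a + vdot b b.
Proof. by have := vdot_ge0 (a - b); rewrite vdotBl !vdotBr (vdotC b a); lra. Qed.

Lemma qformE B a : (a^T *m B *m a) 0 0 = qform B a.
Proof. by rewrite /qform /vdot mulmxA. Qed.

Lemma qform0 B : qform B 0 = 0.
Proof. by rewrite /qform mulmx0 vdot0r. Qed.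

Lemma qformDm (A B : 'M[R]_n) a : qform (A + B) a = qform A a + qform B a.
Proof. by rewrite /qform mulmxDl vdotDr. Qed.

Lemma qform_scalar k a : qform (k%:M) a = k * vdot a a.
Proof. by rewrite /qform mul_scalar_mx vdotZr. Qed.

Lemma qformZ B k a : qform B (k *: a) = k ^+ 2 * qform B a.
Proof. by rewrite /qform -scalemxAr vdotZl vdotZr mulrA expr2. Qed.

Lemma norm_qform_le B a : `|qform B a| <= n%:R * (n%:R * `|B|) * `|a| ^+ 2.
Proof.
apply: le_trans (norm_vdot_le _ _) _.
rewrite [leRHS](_ : _ = n%:R * (`|a| * (n%:R * (`|B| * `|a|)))); last by ring.
by rewrite ler_wpM2l // ler_wpM2l ?norm_mulmx_le.
Qed.

Section Symmetric.
Variable B : 'M[R]_n.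
Hypothesis symB : B^T = B.

Lemma vdot_mulmx_sym a b : vdot a (B *m b) = vdot (B *m a) b.
Proof. by rewrite vdot_mulmx symB. Qed.

Lemma qformD_sym a b :
  qform B (a + b) = qform B a + 2%:R * vdot a (B *m b) + qform B b.
Proof.
rewrite /qform mulmxDr !vdotDl !vdotDr (vdotC b) -vdot_mulmx_sym; ring.
Qed.

Lemma qformB_sym a b :
  qform B (a - b) = qform B a - 2%:R * vdot a (B *m b) + qform B b.
Proof. by rewrite -[- b]scaleN1r qformD_sym qformZ -scalemxAr vdotZr; ring. Qed.

Lemma qform_CauchySchwarz : (forall u, 0 <= qform B u) ->
  forall a b, vdot a (B *m b) ^+ 2 <= qform B a * qform B b.
Proof.
move=> psd a b; set al := qform B a; set be := qform B b; set ga := vdot a (B *m b).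
have Ht t : 0 <= al + 2%:R * t * ga + t ^+ 2 * be.
  by have := psd (a + t *: b); rewrite qformD_sym qformZ -scalemxAr vdotZr mulrA.
have al0 : 0 <= al := psd a; have be0 : 0 <= be := psd b.
have [be_gt0|] := ltrP 0 be.
  have := Ht (- (ga / be)); rewrite sqrrN expr_div_n.
  have -> : al + 2%:R * - (ga / be) * ga + ga ^+ 2 / be ^+ 2 * be = al - ga ^+ 2 / be.
    by field; rewrite gt_eqF.
  by rewrite subr_ge0 ler_pdivrMr // mulrC.
move=> be_le0; have {be_le0} be_eq0 : be = 0 by apply/eqP; rewrite eq_le be_le0.
have [->|ga_neq0] := eqVneq ga 0; first by rewrite expr0n mulr_ge0.
have := Ht (- (al + 1) / (2%:R * ga)); rewrite be_eq0 mulr0 addr0.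
have -> : 2%:R * (- (al + 1) / (2%:R * ga)) * ga = - (al + 1) by field.
lra.
Qed.

End Symmetric.
End VectorDot.

Section Coercive.
Variables (R : realFieldType) (n : nat).
Implicit Types (A B : 'M[R]_n) (w z : 'cV[R]_n).

Definition qform_coercive B :=
  exists2 c : R, 0 < c & forall w, c * `|w| ^+ 2 <= qform B w.

Lemma qform_pos_unitmx A : (forall w, w != 0 -> 0 < qform A w) -> A \in unitmx.
Proof.
move=> Apos; rewrite unitmxE unitfE; apply/negP => /det0P [v v_neq0 vA0].
have vT_neq0 : v^T != 0 by rewrite -(inj_eq (@trmx_inj _ _ _)) trmxK trmx0.
by have := Apos _ vT_neq0; rewrite /qform vdot_mulmx -trmx_mul vA0 trmx0 vdotC vdot0r ltxx.
Qed.

Lemma coercive_addmx_unitmx A E (c : R) : 0 < c ->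
  (forall w, c * `|w| ^+ 2 <= qform A w) -> n%:R * (n%:R * `|E|) < c ->
  A + E \in unitmx.
Proof.
move=> c_gt0 coer E_small; apply: qform_pos_unitmx => w w_neq0.
have w2_gt0 : 0 < `|w| ^+ 2 by rewrite exprn_gt0 // normr_gt0.
have := norm_qform_le E w; rewrite ler_norml => /andP [qE_lo _].
have := coer w; rewrite -(ltr_pM2r w2_gt0) in E_small; rewrite qformDm; lra.
Qed.

Lemma norm_le_invmx A z :
  A \in unitmx -> `|z| <= (n%:R * `|invmx A| + 1) * `|A *m z|.
Proof.
move=> Aunit; rewrite -[X in `|X| <= _](mulKmx Aunit z).
apply: le_trans (norm_mulmx_le _ _) _.
by rewrite mulrA ler_wpM2r // lerDl.
Qed.

Lemma sqr_norm_le_invmx A z : A \in unitmx ->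
  `|z| ^+ 2 <= (n%:R * `|invmx A| + 1) ^+ 2 * vdot (A *m z) (A *m z).
Proof.
move=> A_unit; have z_le := norm_le_invmx z A_unit.
apply: le_trans (_ : ((n%:R * `|invmx A| + 1) * `|A *m z|) ^+ 2 <= _).
  by rewrite !expr2; exact: (ler_pM (normr_ge0 _) (normr_ge0 _) z_le z_le).
by rewrite exprMn; apply: ler_wpM2l; [exact: sqr_ge0 | exact: sqr_norm_le_vdot].
Qed.

Lemma vdot_mulmx_le_qform B w : B^T = B -> (forall u, 0 <= qform B u) ->
  vdot (B *m w) (B *m w) <= n%:R * (n%:R * `|B|) * qform B w.
Proof.
move=> symB psd; set u := B *m w; set K := n%:R * (n%:R * `|B|).
have K_ge0 : 0 <= K by rewrite !mulr_ge0.
have CS := qform_CauchySchwarz symB psd w u; rewrite (vdot_mulmx_sym symB) -/u in CS.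
have qu_le : qform B u <= K * vdot u u.
  apply: le_trans (le_trans (ler_norm _) (norm_qform_le _ _)) _.
  exact: (ler_wpM2l K_ge0 (sqr_norm_le_vdot u)).
have [uu_le0|uu_gt0] := leP (vdot u u) 0; first exact: le_trans uu_le0 (mulr_ge0 K_ge0 (psd w)).
rewrite -(ler_pM2r uu_gt0) -expr2; apply: le_trans CS _.
by rewrite [leRHS]mulrAC [leRHS]mulrC; exact: (ler_wpM2l (psd w) qu_le).
Qed.

Lemma psd_unitmx_coercive B : B^T = B -> (forall u, 0 <= qform B u) ->
  B \in unitmx -> qform_coercive B.
Proof.
move=> symB psd B_unit; set ka := n%:R * `|invmx B| + 1.
set K := n%:R * (n%:R * `|B|) + 1.
have ka_gt0 : 0 < ka by rewrite ltr_wpDl // mulr_ge0.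
have K_gt0 : 0 < K by rewrite ltr_wpDl // !mulr_ge0.
exists (ka ^+ 2 * K)^-1; first by rewrite invr_gt0 mulr_gt0 // exprn_gt0.
move=> w; rewrite mulrC ler_pdivrMr ?mulr_gt0 ?exprn_gt0 // mulrC -mulrA.
apply: le_trans (sqr_norm_le_invmx w B_unit) _; apply: (ler_wpM2l (sqr_ge0 _)).
apply: le_trans (vdot_mulmx_le_qform w symB psd) _.
by apply: (ler_wpM2r (psd w)); rewrite lerDl.
Qed.

End Coercive.

Section PosDef.
Variables (R : realType) (n : nat).
Implicit Types A : 'M[R]_n.

Lemma posdef_unitmx A : posdef A -> A \in unitmx.
Proof. by case=> _ Apos; apply: qform_pos_unitmx => w /Apos; rewrite qformE. Qed.

Lemma posdef_qform_ge0 A : posdef A -> forall w, 0 <= qform A w.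
Proof.
case=> _ Apos w; have [->|/Apos] := eqVneq w 0; first by rewrite qform0.
by rewrite qformE => /ltW.
Qed.

Lemma posdef_coercive A : posdef A -> qform_coercive A.
Proof.
move=> Apd; apply: psd_unitmx_coercive; last exact: posdef_unitmx.
- by case: Apd.
- exact: posdef_qform_ge0.
Qed.

Lemma posdef_shift_sym A (e : R) : posdef (A + e *: 1%:M) -> A^T = A.
Proof. by case; rewrite linearD linearZ /= trmx1 => /addIr. Qed.

Lemma posdef_shift_pos A (e : R) v : posdef (A + e *: 1%:M) -> qform A v < 0 -> 0 < e.
Proof.
case=> _ Apos qv_lt0.
have v_neq0 : v != 0 by apply: contraTneq qv_lt0 => ->; rewrite qform0 ltxx.
have := Apos v v_neq0; rewrite qformE qformDm scalemx1 qform_scalar => qMv_gt0.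
rewrite ltNge; apply/negP => e_le0.
by have := mulr_le0_ge0 e_le0 (vdot_ge0 v); lra.
Qed.

End PosDef.

Lemma nbhs_norm_ltP (R : numFieldType) (V : normedModType R) (P : V -> Prop) p :
  (\forall x \near p, P x) <-> exists2 r : R, 0 < r & forall x, `|x - p| < r -> P x.
Proof.
split=> [/nbhs_normP [r r_gt0 Pr]|[r r_gt0 Pr]]; last apply/nbhs_normP;
  by exists r => // x; rewrite /ball_ /= distrC => /Pr.
Qed.

Section Gradient.
Variables (R : realType) (n : nat).
Implicit Types (f : 'cV[R]_n -> R) (p x d v : 'cV[R]_n).

Lemma sum_basis_vec (y : 'cV[R]_n) : y = \sum_j y j 0 *: basis_vec R j.
Proof.
apply/matrixP => i k; rewrite summxE (bigD1 i) //= big1 => [|j ji].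
  by rewrite !mxE ord1 !eqxx mulr1 addr0.
by rewrite !mxE eq_sym (negbTE ji) mulr0.
Qed.

Lemma diff_sum_basis (W : normedModType R) (F : 'cV[R]_n -> W) p y :
  differentiable F p -> 'd F p y = \sum_j y j 0 *: 'D_(basis_vec R j) F p.
Proof.
move=> dF; rewrite {1}(sum_basis_vec y) linear_sum; apply: eq_bigr => j _.
by rewrite linearZ /= deriveE.
Qed.

Lemma derive_vdot_grad f p d : differentiable f p -> 'D_d f p = vdot (grad f p) d.
Proof.
move=> df; rewrite deriveE // diff_sum_basis // vdotE; apply: eq_bigr => j _.
by rewrite mxE mulrC.
Qed.

Lemma diff_grad f p y : differentiable (grad f) p -> 'd (grad f) p y = hess f p *m y.
Proof.
move=> dg; rewrite diff_sum_basis //; apply/matrixP => i k.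
rewrite summxE [RHS]mxE ord1; apply: eq_bigr => j _.
rewrite [LHS]mxE [hess f p i j]mxE.
rewrite (derive_mx (M := grad f)); last exact: diff_derivable.
rewrite [X in _ * X = _]mxE mulrC; congr (_ * _).
by have -> : (fun t => grad f t i 0) = (fun t => 'D_(basis_vec R i) f t)
  by apply/funext => t; rewrite mxE.
Qed.

Lemma grad_taylor1 f p (eta : R) : differentiable (grad f) p -> 0 < eta ->
  exists2 r : R, 0 < r & forall x, `|x - p| < r ->
    `|grad f x - grad f p - hess f p *m (x - p)| <= eta * `|x - p|.
Proof.
move=> dg eta_gt0; have /eqaddoP /(_ eta eta_gt0) := diff_locally dg.
case/nbhs_norm_ltP => r r_gt0 Hr; exists r => // x xp.
have := Hr (x - p); rewrite subr0 => /(_ xp).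
by rewrite /= !fctE /= subrK diff_grad // opprD addrA.
Qed.

Lemma is_derive_line f p d s : differentiable f (p + s *: d) ->
  is_derive s 1 (fun t => f (p + t *: d)) (vdot (grad f (p + s *: d)) d).
Proof.
move=> df.
have E : (fun h : R => h^-1 *: (((fun t => f (p + t *: d)) \o shift s) (h *: 1) - f (p + s *: d)))
  = (fun h => h^-1 *: ((f \o shift (p + s *: d)) (h *: d) - f (p + s *: d))).
  apply/funext => h /=; congr (_ *: (f _ - _)).
  by rewrite [h *: 1]mulr1 scalerDl addrCA.
have der : derivable f (p + s *: d) d by apply: diff_derivable.
split; first by rewrite /derivable E.
by rewrite /derive E -/(derive f (p + s *: d) d) derive_vdot_grad.
Qed.

Lemma continuous_line f p d : (forall x, differentiable f x) ->
  continuous (fun t : R => f (p + t *: d)).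
Proof.
move=> df t; have := @ex_derive _ _ _ _ _ _ _ (is_derive_line (df (p + t *: d))).
by move/derivable1_diffP/differentiable_continuous.
Qed.

Lemma line_MVT f p v (s : R) : (forall x, differentiable f x) -> 0 < s ->
  exists2 t, 0 < t < s & f (p + s *: v) - f p = s * vdot (grad f (p + t *: v)) v.
Proof.
move=> df s_gt0.
have [t] := MVT s_gt0 (fun t _ => is_derive_line (df (p + t *: v)))
  (continuous_subspaceT (continuous_line (p := p) (d := v) df)).
by rewrite in_itv /= scale0r addr0 subr0 mulrC; exists t.
Qed.

Lemma line_slope_approx f p (eta : R) : differentiable (grad f) p -> grad f p = 0 ->
  0 < eta -> exists2 r : R, 0 < r & forall t v, 0 < t -> t * `|v| < r ->
    `|vdot (grad f (p + t *: v)) v - t * qform (hess f p) v|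
      <= t * (n%:R * eta * `|v| ^+ 2).
Proof.
move=> dg g0 eta_gt0; have [r r_gt0 Hr] := grad_taylor1 dg eta_gt0.
exists r => // t v t_gt0 tv_lt; have ptv : p + t *: v - p = t *: v by rewrite addrC addKr.
have := Hr (p + t *: v); rewrite ptv normrZ gtr0_norm // => /(_ tv_lt) err_le.
set err := _ - _ - _ in err_le.
have -> : vdot (grad f (p + t *: v)) v - t * qform (hess f p) v = vdot err v.
  by rewrite /err g0 subr0 vdotBl -scalemxAr vdotZl [vdot (_ *m v) v]vdotC.
apply: le_trans (norm_vdot_le _ _) _.
rewrite [leRHS](_ : _ = n%:R * ((eta * (t * `|v|)) * `|v|)); last by ring.
by rewrite ler_wpM2l // ler_wpM2r.
Qed.

End Gradient.

Section SecondOrder.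
Variables (R : realType) (n : nat).
Implicit Types (f : 'cV[R]_n -> R) (p v : 'cV[R]_n).

Lemma local_min_qform_ge0 f p : C2 f -> grad f p = 0 -> local_min f p ->
  forall v, 0 <= qform (hess f p) v.
Proof.
move=> [df [dg _]] g0 /nbhs_norm_ltP [rm rm_gt0 fmin] v.
rewrite leNgt; apply/negP => qv_lt0; set c := - qform (hess f p) v.
have c_gt0 : 0 < c by rewrite oppr_gt0.
set N := n%:R * `|v| ^+ 2 + 1; have N_gt0 : 0 < N by rewrite ltr_wpDl ?mulr_ge0.
set eta := c / (2%:R * N); have eta_gt0 : 0 < eta by rewrite divr_gt0 ?mulr_gt0.
have eta_small : n%:R * eta * `|v| ^+ 2 <= c / 2%:R.
  have etaN : eta * N = c / 2%:R by rewrite /eta; field; rewrite gt_eqF.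
  rewrite -etaN [leLHS]mulrAC [leLHS]mulrC.
  by apply: ler_wpM2l; [exact: ltW | rewrite lerDl].
have [r r_gt0 slope] := line_slope_approx (dg p) g0 eta_gt0.
have v1_gt0 : 0 < `|v| + 1 by rewrite ltr_wpDl.
have min_le_r : Num.min r rm <= r by rewrite ge_min lexx.
have min_le_rm : Num.min r rm <= rm by rewrite ge_min lexx orbT.
set s := Num.min r rm / (`|v| + 1); have s_gt0 : 0 < s by rewrite divr_gt0 ?lt_min ?r_gt0.
have sv_lt : s * `|v| < Num.min r rm.
  by rewrite mulrAC ltr_pdivrMr // ltr_pM2l ?lt_min ?r_gt0 // ltrDl.
have [t /andP [t_gt0 t_lt] fdiff] := line_MVT p v df s_gt0.
have tv_lt : t * `|v| < r.
  by apply: le_lt_trans (lt_le_trans sv_lt min_le_r); rewrite ler_wpM2r // ltW.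
have slope_neg : vdot (grad f (p + t *: v)) v < 0.
  have := le_trans (ler_norm _) (slope t v t_gt0 tv_lt).
  rewrite -[qform _ v]opprK -/c mulrN.
  have := ler_wpM2l (ltW t_gt0) eta_small.
  have : 0 < t * c by rewrite mulr_gt0.
  lra.
have : f p <= f (p + s *: v).
  apply: fmin; rewrite addrAC subrr add0r normrZ gtr0_norm //.
  exact: lt_le_trans sv_lt min_le_rm.
by rewrite -subr_ge0 fdiff pmulr_rge0 // leNgt slope_neg.
Qed.

Lemma qform_coercive_local_min f p : C2 f -> grad f p = 0 ->
  qform_coercive (hess f p) -> local_min f p.
Proof.
move=> [df [dg _]] g0 [c c_gt0 coer].
have n1_gt0 : 0 < n%:R + 1 :> R by rewrite ltr_wpDl.
set eta := c / (n%:R + 1); have eta_gt0 : 0 < eta by rewrite divr_gt0.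
have eta_small : n%:R * eta <= c.
  have etaN : eta * (n%:R + 1) = c by rewrite /eta divfK // gt_eqF.
  by rewrite -etaN [leLHS]mulrC; apply: ler_wpM2l; [exact: ltW | rewrite lerDl].
have [r r_gt0 slope] := line_slope_approx (dg p) g0 eta_gt0.
apply/nbhs_norm_ltP; exists r => // x; set d := x - p => d_lt.
have [t /andP [t_gt0 t_lt1] fdiff] := line_MVT p d df ltr01.
have td_lt : t * `|d| < r.
  exact: le_lt_trans (ler_piMl (normr_ge0 _) (ltW t_lt1)) d_lt.
have := slope t d t_gt0 td_lt; rewrite ler_norml => /andP [slope_lo _].
have := ler_wpM2l (ltW t_gt0) (coer d).
have := ler_wpM2l (ltW t_gt0) (ler_wpM2r (sqr_ge0 `|d|) eta_small).
have : 0 <= t * (c * `|d| ^+ 2) by rewrite !mulr_ge0 ?sqr_ge0 // ltW.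
move: fdiff; rewrite scale1r mul1r /d [p + _]addrC subrK; lra.
Qed.

Lemma not_local_min_qform_neg f p : C2 f -> grad f p = 0 ->
  (hess f p)^T = hess f p -> hess f p \in unitmx -> ~ local_min f p ->
  exists v, qform (hess f p) v < 0.
Proof.
move=> C2f g0 symH H_unit not_min; apply: contrapT => no_neg; apply: not_min.
apply: qform_coercive_local_min C2f g0 (psd_unitmx_coercive symH _ H_unit) => u.
by rewrite leNgt; apply/negP => qu_lt0; apply: no_neg; exists u.
Qed.

End SecondOrder.

Section NewtonStep.
Variables (R : realType) (n : nat).
Implicit Types (f eps : 'cV[R]_n -> R) (x xs : 'cV[R]_n).

Lemma newton_map_mulmx f eps x xs : hess f x + eps x *: 1%:M \in unitmx ->
  (hess f x + eps x *: 1%:M) *m (newton_map f eps x - xs)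
    = (hess f x + eps x *: 1%:M) *m (x - xs) - grad f x.
Proof. by move=> Mx_unit; rewrite /newton_map addrAC mulmxBr mulKVmx. Qed.

(* Write H_x = hess f x.  The Newton step solves (H_x + e I) z = (H_x + e I) d - grad f x,
   and H_x = H + E with E small while grad f x = H d up to a small error. *)
Lemma newton_step_bound f eps xs x (c eta : R) : 0 < c ->
  (forall w, c * `|w| ^+ 2 <= qform (hess f xs + eps xs *: 1%:M) w) ->
  eps x = eps xs -> n%:R * `|hess f x - hess f xs| <= eta ->
  n%:R * (n%:R * `|hess f x - hess f xs|) < c ->
  `|hess f xs *m (x - xs) - grad f x| <= eta * `|x - xs| ->
  `|(hess f xs + eps xs *: 1%:M) *m (newton_map f eps x - xs) - eps xs *: (x - xs)|
    <= eta * (2%:R * `|x - xs| + `|newton_map f eps x - xs|).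
Proof.
move=> c_gt0 coer ex nE_eta nE_c Hd.
set H := hess f xs; set e := eps xs; set M := H + e *: 1%:M.
set E := hess f x - H in nE_eta nE_c *.
set z := newton_map f eps x - xs; set d := x - xs in Hd *.
have ME : hess f x + eps x *: 1%:M = M + E by rewrite ex [RHS]addrC addrA subrK.
have M_unit : M + E \in unitmx := coercive_addmx_unitmx c_gt0 coer nE_c.
have split : M *m z - e *: d = (H *m d - grad f x) + (E *m d - E *m z).
  have := @newton_map_mulmx f eps x xs; rewrite ME -/z -/d => /(_ M_unit) Mz.
  have -> : M *m z = M *m d + E *m d - grad f x - E *m z.
    by rewrite -mulmxDl -Mz [(M + E) *m z]mulmxDl addrK.
  rewrite mulmxDl scalemx1 mul_scalar_mx.
  by apply/matrixP => i j; rewrite !mxE; lra.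
rewrite split; apply: le_trans (ler_normD _ _) _.
apply: le_trans (lerD (lexx _) (ler_normB _ _)) _.
have Ed : `|E *m d| <= eta * `|d|.
  by apply: le_trans (norm_mulmx_le _ _) _; rewrite mulrA ler_wpM2r.
have Ez : `|E *m z| <= eta * `|z|.
  by apply: le_trans (norm_mulmx_le _ _) _; rewrite mulrA ler_wpM2r.
lra.
Qed.

Lemma newton_step_approx f eps xs : C2 f -> grad f xs = 0 ->
  (\forall x \near xs, eps x = eps xs) ->
  qform_coercive (hess f xs + eps xs *: 1%:M) ->
  forall eta : R, 0 < eta -> \forall x \near xs,
    `|(hess f xs + eps xs *: 1%:M) *m (newton_map f eps x - xs) - eps xs *: (x - xs)|
      <= eta * (2%:R * `|x - xs| + `|newton_map f eps x - xs|).
Proof.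
move=> [_ [dg hess_cont]] g0 eps_near [c c_gt0 coer] eta eta_gt0.
have nn_gt0 : 0 < n%:R * n%:R + 1 :> R by rewrite ltr_wpDl ?mulr_ge0.
set eh := Num.min eta c / (n%:R * n%:R + 1).
have eh_gt0 : 0 < eh by rewrite divr_gt0 ?lt_min ?eta_gt0.
have ehN : eh * (n%:R * n%:R + 1) = Num.min eta c by rewrite divfK // gt_eqF.
have eh_eta : n%:R * eh <= eta.
  apply: le_trans (_ : Num.min eta c <= eta); last by rewrite ge_min lexx.
  rewrite -ehN mulrC ler_wpM2l ?ltW //.
  by have := sqr_ge0 (n%:R - 1 : R); have : 0 <= n%:R :> R by []; nra.
have eh_c : n%:R * (n%:R * eh) < c.
  apply: lt_le_trans (_ : Num.min eta c <= c); last by rewrite ge_min lexx orbT.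
  by rewrite -ehN mulrA mulrC ltr_pM2l // ltrDl.
have [rg rg_gt0 taylor] := grad_taylor1 (dg xs) eta_gt0.
near=> x; apply: newton_step_bound c_gt0 coer _ _ _ _.
- by near: x.
- apply: le_trans eh_eta; apply: (ler_wpM2l (ler0n _ n)); apply: ltW; near: x.
  by move: (hess_cont xs) => /cvgr_distC_lt; apply.
- apply: le_lt_trans eh_c; do 2 apply: (ler_wpM2l (ler0n _ n)); apply: ltW; near: x.
  by move: (hess_cont xs) => /cvgr_distC_lt; apply.
- rewrite -normrN opprB -[grad f x]subr0 -g0; apply: taylor; near: x.
  by apply/(nbhs_norm_ltP (fun y => `|y - xs| < rg)); exists rg.
Unshelve. all: by end_near.
Qed.

End NewtonStep.

Section ContractionStability.
Variables (R : realType) (n : nat).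
Variables (Phi : 'cV[R]_n -> 'cV[R]_n) (xs : 'cV[R]_n) (r c : R).
Hypotheses (r_gt0 : 0 < r) (c_ge0 : 0 <= c) (c_lt1 : c < 1).
Hypothesis contract : forall x, `|x - xs| < r ->
  vdot (Phi x - xs) (Phi x - xs) <= c * vdot (x - xs) (x - xs).

Let V x := vdot (x - xs) (x - xs).

Lemma iter_contraction x0 : V x0 < r ^+ 2 -> forall k, V (iter k Phi x0) <= c ^+ k * V x0.
Proof.
move=> V0_lt; elim=> [|k IHk]; first by rewrite mul1r.
have ck_le1 : c ^+ k <= 1 by rewrite exprn_ile1 // ltW.
have Vk_lt : V (iter k Phi x0) < r ^+ 2.
  exact: le_lt_trans IHk (le_lt_trans (ler_piMl (vdot_ge0 _) ck_le1) V0_lt).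
rewrite iterS exprS -mulrA; apply: le_trans (contract (norm_lt_of_vdot_lt (ltW r_gt0) Vk_lt)) _.
exact: ler_wpM2l.
Qed.

Lemma contraction_lyap_stable : lyap_stable Phi xs.
Proof.
move=> e e_gt0; set m := Num.min r e.
have m_gt0 : 0 < m by rewrite lt_min r_gt0.
have n1_gt0 : 0 < n%:R + 1 :> R by rewrite ltr_wpDl.
exists (m / (n%:R + 1)); first by rewrite divr_gt0.
move=> x0; rewrite ltr_pdivlMr // mulrC => x0_lt k.
have V0_lt : V x0 < m ^+ 2 := vdot_lt_sqr x0_lt.
have m_le : m <= r /\ m <= e by rewrite !ge_min !lexx orbT.
have Vk_lt : V (iter k Phi x0) < m ^+ 2.
  have V0_lt_r : V x0 < r ^+ 2.
    have m_ge0 := ltW m_gt0.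
    by apply: lt_le_trans V0_lt _; rewrite !expr2; exact: (ler_pM m_ge0 m_ge0 m_le.1 m_le.1).
  apply: le_lt_trans (iter_contraction V0_lt_r k) (le_lt_trans _ V0_lt).
  by apply: ler_piMl (vdot_ge0 _) _; rewrite exprn_ile1 // ltW.
exact: lt_le_trans (norm_lt_of_vdot_lt (ltW m_gt0) Vk_lt) m_le.2.
Qed.

Lemma contraction_loc_attractive : loc_attractive Phi xs.
Proof.
have n1_gt0 : 0 < n%:R + 1 :> R by rewrite ltr_wpDl.
exists (r / (n%:R + 1)); first by rewrite divr_gt0.
move=> x0; rewrite ltr_pdivlMr // mulrC => x0_lt.
have V0_lt : V x0 < r ^+ 2 := vdot_lt_sqr x0_lt.
apply/cvgrPdistC_lt => e e_gt0.
have V01_gt0 : 0 < V x0 + 1 by rewrite ltr_wpDl ?vdot_ge0.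
have ck_small : \forall k \near \oo, `|c ^+ k| < e ^+ 2 / (V x0 + 1).
  apply: cvgr0_norm_lt; last by rewrite divr_gt0 ?exprn_gt0.
  by apply: cvg_expr; rewrite ger0_norm.
near=> k; apply: norm_lt_of_vdot_lt (ltW e_gt0) _.
apply: le_lt_trans (iter_contraction V0_lt k) _.
have : `|c ^+ k| < e ^+ 2 / (V x0 + 1) by near: k.
rewrite ger0_norm ?exprn_ge0 // ltr_pdivlMr // => ck_lt.
apply: le_lt_trans ck_lt; rewrite ler_wpM2l ?exprn_ge0 // lerDl.
Unshelve. all: by end_near.
Qed.

Lemma contraction_loc_asym_stable : loc_asym_stable Phi xs.
Proof. by split; [exact: contraction_lyap_stable | exact: contraction_loc_attractive]. Qed.

End ContractionStability.

Section StableCase.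
Variables (R : realType) (n : nat).
Implicit Types (f eps : 'cV[R]_n -> R) (xs : 'cV[R]_n).

Lemma qform_coercive_vdot (B : 'M[R]_n) : qform_coercive B ->
  exists2 a : R, 0 < a & forall w, a * vdot w w <= qform B w.
Proof.
case=> c c_gt0 coer; have n1_gt0 : 0 < n%:R + 1 :> R by rewrite ltr_wpDl.
exists (c / (n%:R + 1)) => [|w]; first by rewrite divr_gt0.
apply: le_trans (coer w); rewrite mulrAC ler_pdivrMr // -mulrA.
apply: ler_wpM2l; first exact: ltW.
apply: le_trans (vdot_le_sqr_norm w) _; rewrite mulrC.
by apply: ler_wpM2l; [exact: sqr_ge0 | rewrite lerDl].
Qed.

(* With M = H + e I and rho = M z - e d, the quadratic form q_M z is at least (a + e) |z|^2
   and equals e <z, d> + <z, rho> <= (e / 2) (|z|^2 + |d|^2) + (a / 4) (2 |z|^2 + |d|^2). *)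
Lemma vdot_contraction (H : 'M[R]_n) (e a eta : R) (z d : 'cV[R]_n) :
  0 <= e -> 0 < a -> (forall w, a * vdot w w <= qform H w) ->
  0 <= eta -> n%:R * eta <= a / 4%:R ->
  `|(H + e *: 1%:M) *m z - e *: d| <= eta * (2%:R * `|d| + `|z|) ->
  vdot z z <= (2%:R * e + a) / (2%:R * e + 2%:R * a) * vdot d d.
Proof.
move=> e_ge0 a_gt0 coer eta_ge0 eta_small rho_le.
set M := H + e *: 1%:M; set rho := M *m z - e *: d in rho_le.
have qMz_lo : (a + e) * vdot z z <= qform M z.
  by rewrite qformDm scalemx1 qform_scalar mulrDl lerD2r coer.
have qMz : qform M z = e * vdot z d + vdot z rho.
  have Mz : M *m z = rho + e *: d by rewrite subrK.
  by rewrite /qform Mz vdotDr vdotZr addrC.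
have e_zd : e * (2%:R * vdot z d) <= e * (vdot z z + vdot d d).
  by rewrite ler_wpM2l ?vdot_le_mean_square.
have z_rho : vdot z rho <= a / 4%:R * (2%:R * vdot z z + vdot d d).
  have nz_rho : n%:R * (`|z| * `|rho|)
      <= n%:R * eta * (2%:R * (`|z| * `|d|) + `|z| ^+ 2).
    rewrite [leRHS](_ : _ = n%:R * (`|z| * (eta * (2%:R * `|d| + `|z|)))); last by ring.
    by apply: ler_wpM2l => //; apply: ler_wpM2l.
  have norms_le : 2%:R * (`|z| * `|d|) + `|z| ^+ 2 <= 2%:R * vdot z z + vdot d d.
    have := sqr_ge0 (`|z| - `|d|); have := sqr_norm_le_vdot z.
    have := sqr_norm_le_vdot d; rewrite sqrrB; lra.
  apply: le_trans (ler_norm _) (le_trans (norm_vdot_le _ _) (le_trans nz_rho _)).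
  by apply: ler_pM norms_le; rewrite ?mulr_ge0 ?addr_ge0 ?sqr_ge0.
have nd_gt0 : 0 < 2%:R * e + 2%:R * a by rewrite ltr_wpDl ?mulr_ge0 // mulr_gt0.
rewrite mulrAC ler_pdivlMr //; lra.
Qed.

Lemma newton_contraction f eps xs : C2 f -> grad f xs = 0 ->
  (\forall x \near xs, eps x = eps xs) -> 0 <= eps xs ->
  posdef (hess f xs + eps xs *: 1%:M) -> qform_coercive (hess f xs) ->
  exists2 r : R, 0 < r & exists2 c : R, 0 <= c < 1 & forall x, `|x - xs| < r ->
    vdot (newton_map f eps x - xs) (newton_map f eps x - xs)
      <= c * vdot (x - xs) (x - xs).
Proof.
move=> C2f g0 eps_near e_ge0 Mpd /qform_coercive_vdot [a a_gt0 coer].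
have n1_gt0 : 0 < n%:R + 1 :> R by rewrite ltr_wpDl.
set eta := a / 4%:R / (n%:R + 1).
have eta_gt0 : 0 < eta by rewrite !divr_gt0.
have eta_small : n%:R * eta <= a / 4%:R.
  have etaN : eta * (n%:R + 1) = a / 4%:R by rewrite divfK // gt_eqF.
  by rewrite -etaN mulrC; apply: ler_wpM2l; [exact: ltW | rewrite lerDl].
have /nbhs_norm_ltP [r r_gt0 step] :=
  newton_step_approx C2f g0 eps_near (posdef_coercive Mpd) eta_gt0.
exists r => //; set e := eps xs in e_ge0 *.
have den_gt0 : 0 < 2%:R * e + 2%:R * a by rewrite ltr_wpDl ?mulr_ge0 // mulr_gt0.
exists ((2%:R * e + a) / (2%:R * e + 2%:R * a)).
  apply/andP; split; last by rewrite ltr_pdivrMr // mul1r; lra.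
  by apply: divr_ge0; lra.
by move=> x /step; exact: vdot_contraction e_ge0 a_gt0 coer (ltW eta_gt0) eta_small.
Qed.

End StableCase.

Section UnstableCase.
Variables (R : realType) (n : nat).
Variables (H : 'M[R]_n) (e : R).
Implicit Types (u v z d rho : 'cV[R]_n).
Hypotheses (symH : H^T = H) (H_unit : H \in unitmx) (e_gt0 : 0 < e).
Hypothesis M_psd : forall w, 0 <= qform (H + e *: 1%:M) w.

Let M := H + e *: 1%:M.

Lemma qform_mulmx_shift z :
  qform H (M *m z) = qform M (H *m z) + e * vdot (H *m z) (H *m z) + e ^+ 2 * qform H z.
Proof.
rewrite /M !mulmxDl scalemx1 !mul_scalar_mx qformD_sym // qformZ qformDm qform_scalar.
rewrite -scalemxAr vdotZr; ring.
Qed.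

Lemma norm_qform_sub_le u v :
  `|qform H (u - v) - qform H u| <= n%:R * (n%:R * `|H|) * (2%:R * `|u| + `|v|) * `|v|.
Proof.
have -> : qform H (u - v) - qform H u = qform H v - 2%:R * vdot u (H *m v).
  by rewrite qformB_sym //; ring.
apply: le_trans (ler_normB _ _) _.
have cross : `|2%:R * vdot u (H *m v)| <= 2%:R * (n%:R * (`|u| * (n%:R * (`|H| * `|v|)))).
  rewrite normrM ger0_norm // ler_wpM2l //.
  apply: le_trans (norm_vdot_le _ _) _.
  by apply: ler_wpM2l => //; apply: ler_wpM2l => //; apply: norm_mulmx_le.
apply: le_trans (lerD (norm_qform_le _ _) cross) _.
rewrite le_eqVlt; apply/orP; left; apply/eqP; ring.
Qed.

Lemma norm_qform_perturb_le z rho : `|rho| <= `|z| ->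
  `|qform H (M *m z - rho) - qform H (M *m z)|
    <= n%:R * (n%:R * `|H|) * (2%:R * (n%:R * `|M|) + 1) * `|z| * `|rho|.
Proof.
move=> rho_le; apply: le_trans (norm_qform_sub_le _ _) _.
have nH_ge0 : 0 <= n%:R * (n%:R * `|H|) by rewrite !mulr_ge0.
have Mz_le : `|M *m z| <= n%:R * `|M| * `|z| by rewrite -mulrA norm_mulmx_le.
apply: ler_wpM2r; first exact: normr_ge0.
rewrite -(mulrA (n%:R * (n%:R * `|H|))); apply: (ler_wpM2l nH_ge0); lra.
Qed.

(* For the exact linear step M z = e d one has
   e^2 (q_H d - q_H z) = q_M (H z) + e |H z|^2 >= e |H z|^2 >= e |z|^2 / ka^2,
   and th is chosen so that the remainder costs at most half of this. *)
Lemma qform_increase_near_linear : exists2 th : R, 0 < th & exists2 ga : R, 0 < ga &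
  forall z d, `|M *m z - e *: d| <= th * `|z| ->
    ga * `|z| ^+ 2 <= qform H d - qform H z.
Proof.
set ka := n%:R * `|invmx H| + 1; set A := n%:R * `|M|.
set C := n%:R * (n%:R * `|H|) * (2%:R * A + 1).
have ka_gt0 : 0 < ka by rewrite ltr_wpDl ?mulr_ge0.
have ka2_gt0 : 0 < ka ^+ 2 by rewrite exprn_gt0.
have A_ge0 : 0 <= A by rewrite mulr_ge0.
have C_ge0 : 0 <= C.
  by apply: mulr_ge0; [rewrite !mulr_ge0 | rewrite addr_ge0 ?mulr_ge0].
set be := e / (2%:R * ka ^+ 2); have be_gt0 : 0 < be.
  exact: divr_gt0 e_gt0 (mulr_gt0 (ltr0Sn _ 1) ka2_gt0).
set th := Num.min 1 (be / (C + 1)).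
have th_gt0 : 0 < th by rewrite lt_min ltr01 divr_gt0 // ltr_wpDl.
have th_le1 : th <= 1 by rewrite ge_min lexx.
have thC : th * C <= be.
  apply: (@le_trans _ _ (th * (C + 1))).
    by apply: (ler_wpM2l (ltW th_gt0)); rewrite lerDl.
  by rewrite -ler_pdivlMr ?ltr_wpDl // ge_min lexx orbT.
exists th => //; exists (be / e ^+ 2); first by rewrite divr_gt0 // exprn_gt0.
move=> z d rho_le; set rho := M *m z - e *: d in rho_le.
have ed : e *: d = M *m z - rho by rewrite opprB addrC subrK.
have identity : e ^+ 2 * (qform H d - qform H z) = qform M (H *m z)
    + e * vdot (H *m z) (H *m z) + (qform H (M *m z - rho) - qform H (M *m z)).
  by rewrite mulrBr -qformZ ed qform_mulmx_shift; ring.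
have err : `|qform H (M *m z - rho) - qform H (M *m z)| <= be * `|z| ^+ 2.
  have rho_z : `|rho| <= `|z| := le_trans rho_le (ler_piMl (normr_ge0 _) th_le1).
  apply: le_trans (norm_qform_perturb_le rho_z) _; rewrite -/A -/C -mulrA.
  apply: le_trans (ler_wpM2l C_ge0 (ler_wpM2l (normr_ge0 _) rho_le)) _.
  rewrite [leLHS](_ : _ = th * C * `|z| ^+ 2); last by rewrite expr2; ring.
  exact: (ler_wpM2r (sqr_ge0 _) thC).
have ww : 2%:R * be * `|z| ^+ 2 <= e * vdot (H *m z) (H *m z).
  have -> : 2%:R * be * `|z| ^+ 2 = e * (`|z| ^+ 2 / ka ^+ 2).
    by rewrite /be; field; rewrite gt_eqF.
  apply: (ler_wpM2l (ltW e_gt0)); rewrite ler_pdivrMr // mulrC.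
  exact: sqr_norm_le_invmx.
rewrite -(ler_pM2l (exprn_gt0 2 e_gt0)) identity.
have -> : e ^+ 2 * (be / e ^+ 2 * `|z| ^+ 2) = be * `|z| ^+ 2 by field; rewrite gt_eqF.
have := M_psd (H *m z); move: err; rewrite ler_norml => /andP [err_lo _]; lra.
Qed.

Lemma norm_le_of_near_linear (eta : R) z d : eta <= e / 4%:R ->
  `|M *m z - e *: d| <= eta * (2%:R * `|d| + `|z|) ->
  `|d| <= (2%:R * (n%:R * `|M|) / e + 1) * `|z|.
Proof.
move=> eta_le rho_le; set A := n%:R * `|M|.
have Mz_le : `|M *m z| <= A * `|z| by rewrite -mulrA norm_mulmx_le.
have ed_le : `|e *: d| <= `|M *m z| + `|M *m z - e *: d|.
  by rewrite -{1}[e *: d](subKr (M *m z)) ler_normB.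
have eta_d : eta * (2%:R * `|d| + `|z|) <= e / 4%:R * (2%:R * `|d| + `|z|).
  by apply: ler_wpM2r eta_le; rewrite addr_ge0 ?mulr_ge0.
rewrite normrZ gtr0_norm // in ed_le.
have ez_ge0 : 0 <= e * `|z| := mulr_ge0 (ltW e_gt0) (normr_ge0 z).
have eK : e * ((2%:R * A / e + 1) * `|z|) = (2%:R * A + e) * `|z|.
  by field; rewrite gt_eqF.
by rewrite -(ler_pM2l e_gt0) eK; lra.
Qed.

Lemma qform_increase_of_step : exists2 eta : R, 0 < eta & exists2 ga : R, 0 < ga &
  forall z d, `|M *m z - e *: d| <= eta * (2%:R * `|d| + `|z|) ->
    ga * `|z| ^+ 2 <= qform H d - qform H z.
Proof.
have [th th_gt0 [ga ga_gt0 increase]] := qform_increase_near_linear.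
set K := 2%:R * (n%:R * `|M|) / e + 1.
have K_ge0 : 0 <= K by rewrite addr_ge0 // divr_ge0 ?mulr_ge0 // ltW.
have K1_gt0 : 0 < 2%:R * K + 1 by rewrite ltr_wpDl ?mulr_ge0.
set eta := Num.min (e / 4%:R) (th / (2%:R * K + 1)).
have eta_gt0 : 0 < eta by rewrite lt_min !divr_gt0.
have eta_le : eta <= e / 4%:R by rewrite ge_min lexx.
have eta_th : eta * (2%:R * K + 1) <= th.
  by rewrite -ler_pdivlMr // ge_min lexx orbT.
exists eta => //; exists ga => // z d rho_le; apply: increase.
have d_le := norm_le_of_near_linear eta_le rho_le; rewrite -/K in d_le.
apply: le_trans rho_le (le_trans (_ : _ <= eta * ((2%:R * K + 1) * `|z|)) _).
  by apply: (ler_wpM2l (ltW eta_gt0)); lra.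
by rewrite mulrA; apply: (ler_wpM2r (normr_ge0 _)).
Qed.

End UnstableCase.

Lemma newton_qform_increase (R : realType) (n : nat) (f eps : 'cV[R]_n -> R) xs :
  C2 f -> grad f xs = 0 -> (\forall x \near xs, eps x = eps xs) -> 0 < eps xs ->
  posdef (hess f xs + eps xs *: 1%:M) -> hess f xs \in unitmx ->
  exists2 r : R, 0 < r & exists2 ga : R, 0 < ga & forall x, `|x - xs| < r ->
    ga * `|newton_map f eps x - xs| ^+ 2
      <= qform (hess f xs) (x - xs) - qform (hess f xs) (newton_map f eps x - xs).
Proof.
move=> C2f g0 eps_near e_gt0 Mpd H_unit.
have [eta eta_gt0 [ga ga_gt0 increase]] :=
  qform_increase_of_step (posdef_shift_sym Mpd) H_unit e_gt0 (posdef_qform_ge0 Mpd).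
have /nbhs_norm_ltP [r r_gt0 step] :=
  newton_step_approx C2f g0 eps_near (posdef_coercive Mpd) eta_gt0.
by exists r => //; exists ga => // x /step /increase.
Qed.

Section Chetaev.
Variables (R : realType) (n : nat).
Variables (Phi : 'cV[R]_n -> 'cV[R]_n) (xs : 'cV[R]_n) (H : 'M[R]_n) (r ga : R).
Hypotheses (r_gt0 : 0 < r) (ga_gt0 : 0 < ga).
Hypothesis increase : forall x, `|x - xs| < r ->
  ga * `|Phi x - xs| ^+ 2 <= qform H (x - xs) - qform H (Phi x - xs).

Let W x := - qform H (x - xs).
Let L := n%:R * (n%:R * `|H|) + 1.

Let L_gt0 : 0 < L. Proof. by rewrite ltr_wpDl ?mulr_ge0. Qed.

Lemma neg_qform_le x : W x <= L * `|x - xs| ^+ 2.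
Proof.
have := norm_qform_le H (x - xs); rewrite ler_norml => /andP [lo _].
have := sqr_ge0 `|x - xs|; rewrite /W /L; lra.
Qed.

Lemma orbit_chetaev_growth x0 : 0 < W x0 -> (forall k, `|iter k Phi x0 - xs| < r) ->
  forall k, W x0 + k%:R * (ga * (W x0 / L)) <= W (iter k Phi x0).
Proof.
move=> W0_gt0 in_ball; elim=> [|k IHk]; first by rewrite mul0r addr0.
set xk := iter k Phi x0; set xk1 := iter k.+1 Phi x0.
have step : W xk + ga * `|xk1 - xs| ^+ 2 <= W xk1.
  by have := increase (in_ball k); rewrite -iterS /W; lra.
have c_ge0 : 0 <= ga * (W x0 / L) by rewrite mulr_ge0 ?divr_ge0 ?ltW.
have gk_ge0 : 0 <= k%:R * (ga * (W x0 / L)) by rewrite mulr_ge0.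
have W0_le : W x0 <= W xk1.
  by have := mulr_ge0 (ltW ga_gt0) (sqr_ge0 `|xk1 - xs|); lra.
have : ga * (W x0 / L) <= ga * `|xk1 - xs| ^+ 2.
  apply: (ler_wpM2l (ltW ga_gt0)); rewrite ler_pdivrMr // mulrC.
  exact: le_trans W0_le (neg_qform_le _).
rewrite -natr1 mulrDl mul1r; lra.
Qed.

(* Start on the negative direction v: W grows by a fixed amount at each step,
   but inside the ball of radius r it stays below L r^2. *)
Lemma chetaev_unstable v : qform H v < 0 -> unstable Phi xs.
Proof.
move=> qv_lt0 /(_ r r_gt0) [dl dl_gt0 stable].
have v1_gt0 : 0 < `|v| + 1 by rewrite ltr_wpDl.
set t := dl / (`|v| + 1); have t_gt0 : 0 < t by rewrite divr_gt0.
set x0 := xs + t *: v.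
have x0_xs : x0 - xs = t *: v by rewrite /x0 addrC addKr.
have x0_lt : `|x0 - xs| < dl.
  rewrite x0_xs normrZ gtr0_norm // /t mulrAC ltr_pdivrMr //.
  by rewrite mulrDr mulr1 ltrDl.
have W0_gt0 : 0 < W x0.
  by rewrite /W x0_xs qformZ oppr_gt0 pmulr_rlt0 // exprn_gt0.
have growth := orbit_chetaev_growth W0_gt0 (stable _ x0_lt).
have c_gt0 : 0 < ga * (W x0 / L) by rewrite mulr_gt0 ?divr_gt0.
have [k k_big] : exists k : nat, L * r ^+ 2 / (ga * (W x0 / L)) < k%:R.
  exists (Num.Def.archi_bound (L * r ^+ 2 / (ga * (W x0 / L)))); apply: archi_boundP.
  exact: divr_ge0 (mulr_ge0 (ltW L_gt0) (sqr_ge0 r)) (ltW c_gt0).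
have := growth k; have := neg_qform_le (iter k Phi x0).
have : L * `|iter k Phi x0 - xs| ^+ 2 < L * r ^+ 2.
  rewrite ltr_pM2l // !expr2; exact: (ltr_pM (normr_ge0 _) (normr_ge0 _) (stable _ x0_lt k) (stable _ x0_lt k)).
move: k_big; rewrite ltr_pdivrMr //; lra.
Qed.

End Chetaev.

Unset Implicit Arguments. Set Strict Implicit. Set Printing Implicit Defensive.

Theorem theorem1 (R : realType) (n : nat) (f : 'cV[R]_n -> R)
    (eps : 'cV[R]_n -> R) (xs : 'cV[R]_n) :
  C2 f ->
  (forall x, 0 <= eps x) ->
  grad f xs = 0 ->
  hess f xs \in unitmx ->
  (\forall x \near xs, differentiable (hess f) x) ->
  (\forall x \near xs, eps x = eps xs) ->
  posdef (hess f xs + eps xs *: 1%:M) ->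
  (local_min f xs -> loc_asym_stable (newton_map f eps) xs) /\
  (~ local_min f xs -> unstable (newton_map f eps) xs).
Proof.
move=> C2f eps_ge0 g0 H_unit _ eps_near Mpd.
have symH := posdef_shift_sym Mpd.
split=> [fmin | not_min].
  have H_coer := psd_unitmx_coercive symH (local_min_qform_ge0 C2f g0 fmin) H_unit.
  have [r r_gt0 [c /andP [c_ge0 c_lt1] contract]] :=
    newton_contraction C2f g0 eps_near (eps_ge0 xs) Mpd H_coer.
  exact: contraction_loc_asym_stable r_gt0 c_ge0 c_lt1 contract.
have [v qv_lt0] := not_local_min_qform_neg C2f g0 symH H_unit not_min.
have [r r_gt0 [ga ga_gt0 increase]] :=
  newton_qform_increase C2f g0 eps_near (posdef_shift_pos Mpd qv_lt0) Mpd H_unit.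
exact: (chetaev_unstable r_gt0 ga_gt0 increase qv_lt0).
Qed.
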